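(* Let $T$ be a finite tree with labels in $\{a,\varepsilon\}$ in which every node has at most $2$ children and every leaf and every node with $2$ children is labelled $\varepsilon$. If $T$ contains $n\ge 1$ nodes labelled $a$, then $\mathrm{score}(T)\ge \log_2 n$.
   Context: The score of such a tree is defined recursively: if $T$ is a single leaf (labelled $\varepsilon$), $\mathrm{score}(T)=0$; if the root of $T$ has label $\gamma$ and exactly one child subtree $T_1$, then $\mathrm{score}(T)=\mathrm{score}(T_1)+\iota(\gamma)$ where $\iota(a)=1$, $\iota(\varepsilon)=0$; if the root (labelled $\varepsilon$) has child subtrees $T_1,\dots,T_k$ with $k\ge2$, then $\mathrm{score}(T)=\max_{1\le i\le k}\big(\mathrm{score}(T_i)+\iota\big(\sum_{j\ne i}\mathrm{score}(T_j)\big)\big)$, where for a natural number $x$, $\iota(x)=0$ if $x=0$ and $\iota(x)=1$ if $x>0$. *)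

From mathcomp Require Import all_boot.
Set Implicit Arguments. Unset Strict Implicit. Unset Printing Implicit Defensive.

Inductive label := La | Leps.

Definition iota_lab (g : label) : nat := if g is La then 1 else 0.

Definition iota_nat (x : nat) : nat := if x is 0 then 0 else 1.

Inductive tree := Node of label & seq tree.

Definition is_eps (g : label) : bool := if g is Leps then true else false.

Fixpoint count_a (t : tree) : nat :=
  match t with Node l ts => iota_lab l + sumn (map count_a ts) end.

Fixpoint wf_tree (t : tree) : bool :=
  match t with
  | Node l ts =>
      [&& size ts <= 2, (size ts != 1) ==> is_eps l & all wf_tree ts]
  end.

(* For k >= 2 children
   with scores s_1..s_k, score = max_i (s_i + iota(sum_{j<>i} s_j)); the sum
   over j <> i is computed as sumn ss - s_i (exact, since s_i <= sumn ss). *)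
Fixpoint score (t : tree) : nat :=
  match t with
  | Node l ts =>
      match ts with
      | [::] => 0
      | [:: t1] => score t1 + iota_lab l
      | _ => let ss := map score ts in
             foldr maxn 0 [seq s + iota_nat (sumn ss - s) | s <- ss]
      end
  end.

(* A node labelled a has a single child and adds 1 to its score, which
   doubles the room 2 ^ score.  At a binary node with child scores s1, s2 the
   score is max(s1, s2) + 1 when both are positive, and if one is 0 that
   subtree contains no a.  So count_a T < 2 ^ score T by induction, and the
   claim follows by taking log2. *)
From Stdlib Require Import Reals Lra.
From mathcomp Require all_boot.

(* The bound is proved with ssreflect's boolean [<=]; it lives in a module so
   that the main statement keeps Peano's [le] on nat. *)
Module ScoreBound.
Import all_boot.

Lemma tree_ind_Forall (P : tree -> Prop) :
  (forall l ts, List.Forall P ts -> P (Node l ts)) -> forall t, P t.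
Proof.
move=> IHnode; fix IH 1 => -[l ts]; apply: IHnode.
by elim: ts => [|t ts IHts]; constructor.
Qed.

Lemma Forall_wf_tree {P : tree -> Prop} {ts : seq tree} :
  List.Forall (fun t => wf_tree t -> P t) ts -> all wf_tree ts ->
  List.Forall P ts.
Proof.
elim=> [|t {}ts Pt _ IHts] //= /andP[wt wts].
by constructor; [apply: Pt | apply: IHts].
Qed.

Lemma binary_count_bound c1 c2 s1 s2 :
  c1 < 2 ^ s1 -> c2 < 2 ^ s2 ->
  c1 + c2 < 2 ^ maxn (s1 + iota_nat s2) (s2 + iota_nat s1).
Proof.
case: s2 => [|s2] lt1 lt2.
  by rewrite expn0 ltnS leqn0 in lt2; rewrite (eqP lt2) addn0 /= addn0
    (leq_trans lt1) // leq_pexp2l // leq_maxl.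
case: s1 lt1 => [|s1] lt1.
  by rewrite expn0 ltnS leqn0 in lt1; rewrite (eqP lt1) /= addn0
    (leq_trans lt2) // leq_pexp2l // leq_maxr.
have le_max : (maxn s1 s2).+2 <= maxn (s1.+1 + 1) (s2.+1 + 1).
  by rewrite !addn1 !maxnSS.
apply: (leq_trans _ (leq_pexp2l _ le_max)) => //.
have le_exp s : s <= maxn s1 s2 -> 2 ^ s.+1 <= 2 ^ (maxn s1 s2).+1.
  by move=> le_s; rewrite leq_pexp2l.
rewrite expnS mul2n -addnn -addSn leq_add //.
- exact: leq_trans lt1 (le_exp _ (leq_maxl _ _)).
- exact: ltnW (leq_trans lt2 (le_exp _ (leq_maxr _ _))).
Qed.

Lemma count_a_lt_exp_score T : wf_tree T -> count_a T < 2 ^ score T.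
Proof.
elim/tree_ind_Forall: T => l ts IHts /= /and3P[size_le2 unary_or_eps wf_ts].
have {wf_ts} IHts := Forall_wf_tree IHts wf_ts.
case: ts size_le2 unary_or_eps IHts => [|t1 [|t2 [|]]] //= _.
- by case: l.
- move=> _ /List.Forall_cons_iff[lt1 _].
  case: l => /=; rewrite !addn0 ?add0n // addn1 expnS mul2n -addnn add1n.
  by rewrite -addn1 leq_add // expn_gt0.
- case: l => //= _ /List.Forall_cons_iff[lt1 /List.Forall_cons_iff[lt2 _]].
  rewrite !addn0 addKn addnK maxn0 add0n.
  exact: binary_count_bound lt1 lt2.
Qed.

Lemma natpow_expn a b : Nat.pow a b = a ^ b.
Proof. by elim: b => // b IHb; rewrite expnS -IHb. Qed.

Lemma count_a_le_pow_score T :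
  wf_tree T -> (count_a T <= Nat.pow 2 (score T))%coq_nat.
Proof.
by move=> wT; apply/leP; rewrite natpow_expn ltnW // count_a_lt_exp_score.
Qed.

End ScoreBound.

Lemma log2_le_of_le_pow (x : R) (k : nat) :
  (0 < x)%R -> (x <= 2 ^ k)%R -> (ln x / ln 2 <= INR k)%R.
Proof.
intros x_pos x_le.
assert (ln2_pos : (0 < ln 2)%R) by (rewrite <- ln_1; apply ln_increasing; lra).
assert (ln_le : (ln x <= INR k * ln 2)%R).
{ rewrite <- ln_pow by lra.
  destruct (Rle_lt_or_eq_dec _ _ x_le) as [x_lt | ->].
  - left; now apply ln_increasing.
  - now right. }
apply Rmult_le_reg_r with (ln 2); [exact ln2_pos |].
unfold Rdiv; rewrite Rmult_assoc, Rinv_l by lra; lra.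
Qed.

Theorem mainTheorem6 (T : tree) (n : nat) :
  wf_tree T = true -> count_a T = n -> (1 <= n)%nat ->
  (ln (INR n) / ln 2 <= INR (score T))%R.
Proof.
intros wT count_n n_pos; subst n.
apply log2_le_of_le_pow.
- now apply lt_0_INR.
- replace 2%R with (INR 2) by (simpl; ring).
  rewrite <- pow_INR; apply le_INR.
  now apply ScoreBound.count_a_le_pow_score.
Qed.
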